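(* Let $V:\mathbb{R}^d\to\mathbb{R}$ be of class $\mathcal{C}^4$, let $z=0$ be a stationary point with $V(0)=0$, and choose coordinates in which $\nabla^2V(0)=\operatorname{diag}(0,\lambda_2,\dots,\lambda_d)$, where $\lambda_2\neq0$ (of either sign) and $\lambda_3,\dots,\lambda_d>0$. Then there exists a polynomial change of variables $x=y+g(y)$, where $g$ is a polynomial with terms of degree $2$ and $3$, such that $$V(y+g(y))=\frac12\sum_{i=2}^d\lambda_iy_i^2+C_3y_1^3+C_4y_1^4+o(\|y\|^4),$$ where $C_3=V_{111}$ and $C_4=V_{1111}-\frac12\sum_{j=2}^d\frac{V_{11j}^2}{\lambda_j}$.
   Context: For indices $i_1\le\dots\le i_r$ in $\{1,\dots,d\}$, $V_{i_1\dots i_r}=\frac{1}{n_1!\cdots n_d!}\frac{\partial}{\partial x_{i_1}}\cdots\frac{\partial}{\partial x_{i_r}}V(0)$ with $n_j=\#\{k:i_k=j\}$; thus $V_{111}=\frac16\partial_1^3V(0)$, $V_{1111}=\frac1{24}\partial_1^4V(0)$ and $V_{11j}=\frac12\partial_1^2\partial_jV(0)$ for $j\ge2$. *)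

From HB Require Import structures.
From mathcomp Require Import all_boot all_order all_algebra.
From mathcomp Require Import all_classical all_reals all_analysis.
Set Implicit Arguments. Unset Strict Implicit. Unset Printing Implicit Defensive.
Import Order.TTheory GRing.Theory Num.Theory.
Import numFieldNormedType.Exports.
Local Open Scope ring_scope.

Definition evec (R : realType) (d : nat) (i : 'I_d) : 'rV[R]_d := delta_mx 0 i.

Definition partial (R : realType) (d : nat) (i : 'I_d) (f : 'rV[R]_d -> R)
  : 'rV[R]_d -> R := fun x => 'D_(evec R i) f x.

Fixpoint Ck (R : realType) (d : nat) (k : nat) (f : 'rV[R]_d -> R) : Prop :=
  match k with
  | 0%N => continuous f
  | k'.+1 => continuous f /\
      forall i : 'I_d, (forall x, derivable f x (evec R i)) /\
                       Ck k' (partial i f)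
  end.

From HB Require Import structures.
From mathcomp Require Import all_boot all_order all_algebra.
From mathcomp Require Import all_classical all_reals all_analysis.
From mathcomp Require Import ring lra zify.
Import Order.TTheory GRing.Theory Num.Theory.
Import numFieldNormedType.Exports.
Local Open Scope ring_scope.

(* Taylor's theorem of order 4 with Peano remainder follows from the mean
   value theorem applied one coordinate at a time: if f 0 = 0 and, for each
   k < m, the partial derivative d_k f is o(|x|^r) on the span of the first
   k+1 coordinates, then f is o(|x|^(r+1)) on the span of the first m
   coordinates.  This only involves the mixed partials d_h d_i d_j d_k V with
   h <= i <= j <= k.

   With the Taylor polynomial written as 1/2 sum_i lam_i x_i^2 + C(x) + Q(x),
   the substitution x = y + g(y) adds sum_i lam_i y_i g_i(y) to it.  As
   lam_i <> 0 for every i but the first, the quadratic part of g cancels every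
   cubic monomial containing some y_i with i <> 1, and the cubic part of g then
   every such quartic monomial.  What survives is C3 y_1^3 + C4 y_1^4, the
   correction in C4 coming from the cross terms of the quadratic part of g;
   everything else is O(|y|^5). *)

Section RowNorm.
Context {R : realType} {N : nat}.
Implicit Types x y : 'rV[R]_N.

Lemma norm_coord_le x i : `|x 0 i| <= `|x|.
Proof.
rewrite [`|x|]mx_normrE.
exact: (le_bigmax _ (fun ij : 'I_1 * 'I_N => `|x ij.1 ij.2|) (0, i)).
Qed.

Lemma norm_row_le x c : 0 <= c -> (forall i, `|x 0 i| <= c) -> `|x| <= c.
Proof.
move=> c0 xc; rewrite [`|x|]mx_normrE; apply/bigmax_leP; split=> // -[a b] _ /=.
by rewrite (ord1 a).
Qed.

Lemma norm_row_le_coordwise x y : (forall i, `|x 0 i| <= `|y 0 i|) -> `|x| <= `|y|.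
Proof. by move=> xy; apply: norm_row_le => // i; exact: le_trans (xy i) (norm_coord_le _ _). Qed.

Lemma evecE (k j : 'I_N) : evec R k 0 j = (j == k)%:R.
Proof. by rewrite /evec mxE eqxx. Qed.

Lemma coord_mean_value {f : 'rV[R]_N -> R} {k} p t :
  (forall z, derivable f z (evec R k)) ->
  exists2 s, `|s| <= `|t| &
    f (p + t *: evec R k) - f p = t * partial k f (p + s *: evec R k).
Proof.
move=> df.
pose phi tau := f (p + tau *: evec R k).
have quotE tau : (fun h : R => h^-1 *: ((phi \o shift tau) (h *: 1) - phi tau)) =
   (fun h : R => h^-1 *: ((f \o shift (p + tau *: evec R k)) (h *: evec R k)
        - f (p + tau *: evec R k))).
  apply/funext => h /=; rewrite /phi /shift /=.
  by rewrite [h *: 1]mulr1 scalerDl addrCA addrA.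
have phi' tau : is_derive tau (1 : R) phi (partial k f (p + tau *: evec R k)).
  split; first by rewrite /derivable quotE; exact: df.
  by rewrite /derive quotE.
have phi_cont : continuous phi.
  move=> tau; apply: differentiable_continuous.
  apply/derivable1_diffP; exact: (@ex_derive _ _ _ _ _ _ _ (phi' tau)).
have phi0 : phi 0 = f p by rewrite /phi scale0r addr0.
have [t0|t0] := leP 0 t.
  have [c /andP[c0 ct] phiE] := MVT_segment t0 (fun tau _ => phi' tau)
    (continuous_subspaceT phi_cont).
  exists c; first by rewrite !ger0_norm // (le_trans c0).
  by rewrite -/(phi t) -phi0 phiE subr0 mulrC.
have [c /andP[c0 ct] phiE] := MVT_segment (ltW t0) (fun tau _ => phi' tau)
    (continuous_subspaceT phi_cont).
exists c; first by rewrite !ler0_norm ?lerN2 // ltW.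
by rewrite -/(phi t) -phi0 -opprB phiE sub0r mulrN opprK mulrC.
Qed.

Lemma mean_value_drop_coord {f : 'rV[R]_N -> R} {k} z :
  (forall x, derivable f x (evec R k)) ->
  exists xi : 'rV[R]_N, [/\ f z = f (z - z 0 k *: evec R k) + z 0 k * partial k f xi,
    `|xi| <= `|z| & forall i, i != k -> xi 0 i = z 0 i].
Proof.
move=> df; set p := z - z 0 k *: evec R k.
have pE i : p 0 i = if i == k then 0 else z 0 i.
  rewrite !(evecE, mxE); case: eqP => [->|_]; first by rewrite mulr1 subrr.
  by rewrite mulr0 subr0.
have [s sz fE] := coord_mean_value p (z 0 k) df.
have xiE i : (p + s *: evec R k) 0 i = if i == k then s else z 0 i.
  by rewrite mxE pE !(evecE, mxE); case: eqP => _; rewrite ?add0r ?mulr1 ?mulr0 ?addr0.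
exists (p + s *: evec R k); split.
- by rewrite -fE /p subrK addrC subrK.
- by apply: norm_row_le_coordwise => i; rewrite xiE; case: eqP => // ->.
- by move=> i /negbTE ik; rewrite xiE ik.
Qed.

End RowNorm.

Section SmoothnessClass.
Context {R : realType} {N : nat} {k : nat} {f : 'rV[R]_N -> R}.

Lemma Ck_continuous : Ck k f -> continuous f.
Proof. by case: k => [|k'] //= []. Qed.

Lemma Ck_derivable i x : Ck k.+1 f -> derivable f x (evec R i).
Proof. by case=> _ /(_ i) [] /(_ x). Qed.

Lemma Ck_partial i : Ck k.+1 f -> Ck k (partial i f).
Proof. by case=> _ /(_ i) []. Qed.

End SmoothnessClass.

Section LittleoLow.
Context {R : realType} {N : nat}.

Definition low_support (m : nat) (x : 'rV[R]_N) :=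
  forall i : 'I_N, (m <= i)%N -> x 0 i = 0.

Definition littleo_low (f : 'rV[R]_N -> R) (m r : nat) := forall e : R, 0 < e ->
  exists2 d : R, 0 < d &
    forall z, low_support m z -> `|z| < d -> `|f z| <= e * `|z| ^+ r.

Lemma littleo_low0 (f : 'rV[R]_N -> R) r : f 0 = 0 -> littleo_low f 0 r.
Proof.
move=> f0 e e0; exists 1 => // z zS _.
have -> : z = 0 by apply/matrixP => i j; rewrite (ord1 i) mxE zS.
by rewrite f0 normr0 mulr_ge0 // ?ltW // exprn_ge0.
Qed.

Lemma littleo_low_succ (f : 'rV[R]_N -> R) r m (k : 'I_N) : k = m :> nat ->
  (forall x, derivable f x (evec R k)) ->
  littleo_low f m r.+1 -> littleo_low (partial k f) m.+1 r ->
  littleo_low f m.+1 r.+1.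
Proof.
move=> km df sm smk e e0.
have e20 : 0 < e / 2 by rewrite divr_gt0.
have [d1 d10 f_le] := sm _ e20; have [d2 d20 df_le] := smk _ e20.
exists (Num.min d1 d2) => [|z zS]; first by rewrite lt_min d10 d20.
rewrite lt_min => /andP[zd1 zd2].
have [xi [-> xiz xiE]] := mean_value_drop_coord z df.
set p := z - z 0 k *: evec R k.
have pS : low_support m p.
  move=> i mi; rewrite !(evecE, mxE); have [->|ik] := eqVneq i k.
    by rewrite mulr1 subrr.
  rewrite mulr0 subr0 zS // ltn_neqAle mi andbT -km.
  by apply: contraNneq ik => /val_inj ->.
have xiS : low_support m.+1 xi.
  move=> i mi; rewrite xiE ?zS //; apply: contraTneq mi => ->.
  by rewrite km ltnn.
have pz : `|p| <= `|z|.
  apply: norm_row_le_coordwise => i; rewrite !(evecE, mxE).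
  by case: eqP => [->|_]; rewrite ?mulr1 ?subrr ?normr0 // mulr0 subr0.
have fp_le := f_le p pS (le_lt_trans pz zd1).
have dfxi_le := df_le xi xiS (le_lt_trans xiz zd2).
apply: le_trans (ler_normD _ _) _; rewrite normrM.
apply: le_trans (lerD fp_le (ler_pM (normr_ge0 _) (normr_ge0 _) (norm_coord_le z k) dfxi_le)) _.
have p_le : e / 2 * `|p| ^+ r.+1 <= e / 2 * `|z| ^+ r.+1.
  by apply: ler_wpM2l; [exact: ltW | apply: lerXn2r; rewrite ?nnegrE].
have xi_le : `|z| * (e / 2 * `|xi| ^+ r) <= `|z| * (e / 2 * `|z| ^+ r).
  by apply: ler_wpM2l => //; apply: ler_wpM2l; [exact: ltW | apply: lerXn2r; rewrite ?nnegrE].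
apply: le_trans (lerD p_le xi_le) _.
by rewrite exprS le_eqVlt; apply/orP; left; apply/eqP; field.
Qed.

Lemma littleo_low_of_partials (f : 'rV[R]_N -> R) r m : (m <= N)%N ->
  (forall k : 'I_N, (k < m)%N -> forall x, derivable f x (evec R k)) -> f 0 = 0 ->
  (forall k : 'I_N, (k < m)%N -> littleo_low (partial k f) k.+1 r) ->
  littleo_low f m r.+1.
Proof.
elim: m => [|m IH] mN df f0 sm; first exact: littleo_low0.
pose k := Ordinal mN.
have dfk : forall x, derivable f x (evec R k) := df k (ltnSn m).
apply: (@littleo_low_succ f r m k erefl dfk).
  exact: IH (ltnW mN) (fun k hk => df k (ltnW hk)) f0 (fun k hk => sm k (ltnW hk)).
exact: sm.
Qed.

End LittleoLow.

Section PointwiseDerive.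
Context {R : realType} {N : nat}.
Local Notation rv := ('rV[R]_N).
Implicit Types (f g : rv -> R) (x v : rv).

Lemma is_derive_coord x j a :
  is_derive x (evec R j) (fun y : rv => y 0 a) ((a == j)%:R).
Proof.
have E : \forall h \near dnbhs (0 : R),
    h^-1 *: (((fun y : rv => y 0 a) \o shift x) (h *: evec R j) - x 0 a) = (a == j)%:R.
  near=> h.
  have hN0 : h != 0 by near: h; exact: nbhs_dnbhs_neq.
  rewrite /= /shift !mxE eqxx andTb addrK.
  by rewrite /GRing.scale /= mulrA mulVf // mul1r.
split; first exact: (is_cvg_near_cst _ E).
exact: (lim_near_cst _ E).
Unshelve. all: by end_near.
Qed.

(* The library rules, for functions written pointwise. *)
Lemma is_derive_mul f g x v df dg : is_derive x v f df -> is_derive x v g dg ->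
  is_derive x v (fun y => f y * g y) (f x * dg + g x * df).
Proof. exact: is_deriveM. Qed.

Lemma is_derive_add f g x v df dg : is_derive x v f df -> is_derive x v g dg ->
  is_derive x v (fun y => f y + g y) (df + dg).
Proof. exact: is_deriveD. Qed.

Lemma is_derive_sub f g x v df dg : is_derive x v f df -> is_derive x v g dg ->
  is_derive x v (fun y => f y - g y) (df - dg).
Proof. exact: is_deriveB. Qed.

Lemma is_derive_scale f x v (k : R) df : is_derive x v f df ->
  is_derive x v (fun y => k * f y) (k * df).
Proof. exact: is_deriveZ. Qed.

Lemma is_derive_bigsum (h : 'I_N -> rv -> R) x v dh :
  (forall i, is_derive x v (h i) (dh i)) ->
  is_derive x v (fun y => \sum_i h i y) (\sum_i dh i).
Proof. by move=> hd; have := is_derive_sum hd; rewrite fct_sumE. Qed.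

Lemma is_derive_eq f x v df df' : is_derive x v f df -> df = df' -> is_derive x v f df'.
Proof. by move=> ? <-. Qed.

Lemma partialE (i : 'I_N) f x df : is_derive x (evec R i) f df -> partial i f x = df.
Proof. by move=> fd; rewrite /partial derive_val. Qed.

End PointwiseDerive.

Section MultilinearForms.
Context {R : realType} {N : nat}.
Local Notation rv := ('rV[R]_N).
Local Notation I := ('I_N).
Implicit Types (x u v w z : rv).

Definition form1 (c : I -> R) u := \sum_a c a * u 0 a.
Definition form2 (c : I -> I -> R) u v := \sum_a \sum_b c a b * u 0 a * v 0 b.
Definition form3 (c : I -> I -> I -> R) u v w :=
  \sum_a \sum_b \sum_e c a b e * u 0 a * v 0 b * w 0 e.
Definition form4 (c : I -> I -> I -> I -> R) u v w z :=
  \sum_a \sum_b \sum_e \sum_f c a b e f * u 0 a * v 0 b * w 0 e * z 0 f.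

Definition sym2 (c : I -> I -> R) := forall a b, c a b = c b a.
Definition sym3 (c : I -> I -> I -> R) := forall a b e,
  c a b e = c b a e /\ c a b e = c a e b.
Definition sym4 (c : I -> I -> I -> I -> R) := forall a b e f,
  [/\ c a b e f = c b a e f, c a b e f = c a e b f & c a b e f = c a b f e].

Lemma sum_delta (F : I -> R) j : \sum_a (a == j)%:R * F a = F j.
Proof.
rewrite (bigD1 j) //= eqxx mul1r big1 ?addr0 // => a /negbTE ->.
by rewrite mul0r.
Qed.

Lemma form1_0 c : form1 c 0 = 0.
Proof. by rewrite /form1 big1 // => a _; rewrite mxE mulr0. Qed.

Lemma form2_0 c : form2 c 0 0 = 0.
Proof. by rewrite /form2 big1 // => a _; rewrite big1 // => b _; rewrite !mxE !mulr0. Qed.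

Lemma form3_0 c : form3 c 0 0 0 = 0.
Proof.
rewrite /form3 big1 // => a _; rewrite big1 // => b _; rewrite big1 // => e _.
by rewrite !mxE !mulr0.
Qed.

Lemma form4_0 c : form4 c 0 0 0 0 = 0.
Proof.
rewrite /form4 big1 // => a _; rewrite big1 // => b _; rewrite big1 // => e _.
by rewrite big1 // => f _; rewrite !mxE !mulr0.
Qed.

Lemma form2_evec c j v : form2 c (evec R j) v = form1 (c j) v.
Proof.
rewrite /form2 /form1 (bigD1 j) //= [X in _ + X]big1 ?addr0.
  by apply: eq_bigr => b _; rewrite evecE eqxx mulr1.
move=> a /negbTE aj.
by apply: big1 => b _; rewrite evecE aj mulr0 mul0r.
Qed.

Lemma form3_evec c j v w : form3 c (evec R j) v w = form2 (c j) v w.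
Proof.
rewrite /form3 /form2 (bigD1 j) //= [X in _ + X]big1 ?addr0.
  by apply: eq_bigr => b _; apply: eq_bigr => e _; rewrite evecE eqxx mulr1.
move=> a /negbTE aj.
by apply: big1 => b _; apply: big1 => e _; rewrite evecE aj mulr0 !mul0r.
Qed.

Lemma form4_evec c j v w z : form4 c (evec R j) v w z = form3 (c j) v w z.
Proof.
rewrite /form4 /form3 (bigD1 j) //= [X in _ + X]big1 ?addr0.
  by apply: eq_bigr => b _; apply: eq_bigr => e _; apply: eq_bigr => f _;
    rewrite evecE eqxx mulr1.
move=> a /negbTE aj.
by apply: big1 => b _; apply: big1 => e _; apply: big1 => f _;
  rewrite evecE aj mulr0 !mul0r.
Qed.

Lemma form2C c u v : sym2 c -> form2 c u v = form2 c v u.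
Proof.
move=> s; rewrite /form2 exchange_big; apply: eq_bigr => a _; apply: eq_bigr => b _.
by rewrite s; ring.
Qed.

Lemma form3_swap12 c u v w : sym3 c -> form3 c u v w = form3 c v u w.
Proof.
move=> s; rewrite /form3 exchange_big; apply: eq_bigr => a _; apply: eq_bigr => b _.
by apply: eq_bigr => e _; rewrite (s b a e).1; ring.
Qed.

Lemma form3_swap23 c u v w : sym3 c -> form3 c u v w = form3 c u w v.
Proof.
move=> s; rewrite /form3; apply: eq_bigr => a _; rewrite exchange_big.
by apply: eq_bigr => b _; apply: eq_bigr => e _; rewrite (s a e b).2; ring.
Qed.

Lemma form4_swap12 c u v w z : sym4 c -> form4 c u v w z = form4 c v u w z.
Proof.
move=> s; rewrite /form4 exchange_big; apply: eq_bigr => a _; apply: eq_bigr => b _.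
by apply: eq_bigr => e _; apply: eq_bigr => f _; have [-> _ _] := s b a e f; ring.
Qed.

Lemma form4_swap23 c u v w z : sym4 c -> form4 c u v w z = form4 c u w v z.
Proof.
move=> s; rewrite /form4; apply: eq_bigr => a _; rewrite exchange_big.
apply: eq_bigr => b _; apply: eq_bigr => e _; apply: eq_bigr => f _.
by have [_ -> _] := s a e b f; ring.
Qed.

Lemma form4_swap34 c u v w z : sym4 c -> form4 c u v w z = form4 c u v z w.
Proof.
move=> s; rewrite /form4; apply: eq_bigr => a _; apply: eq_bigr => b _.
rewrite exchange_big; apply: eq_bigr => e _; apply: eq_bigr => f _.
by have [_ _ ->] := s a b f e; ring.
Qed.

Lemma form3D1 c u u' v w : form3 c (u + u') v w = form3 c u v w + form3 c u' v w.
Proof.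
rewrite /form3 -big_split; apply: eq_bigr => a _; rewrite -big_split.
apply: eq_bigr => b _; rewrite -big_split; apply: eq_bigr => e _ /=.
by rewrite mxE; ring.
Qed.

Lemma form3D2 c u v v' w : form3 c u (v + v') w = form3 c u v w + form3 c u v' w.
Proof.
rewrite /form3 -big_split; apply: eq_bigr => a _; rewrite -big_split.
apply: eq_bigr => b _; rewrite -big_split; apply: eq_bigr => e _ /=.
by rewrite mxE; ring.
Qed.

Lemma form3D3 c u v w w' : form3 c u v (w + w') = form3 c u v w + form3 c u v w'.
Proof.
rewrite /form3 -big_split; apply: eq_bigr => a _; rewrite -big_split.
apply: eq_bigr => b _; rewrite -big_split; apply: eq_bigr => e _ /=.
by rewrite mxE; ring.
Qed.

Lemma form4D1 c u u' v w z : form4 c (u + u') v w z = form4 c u v w z + form4 c u' v w z.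
Proof.
rewrite /form4 -big_split; apply: eq_bigr => a _; rewrite -big_split.
apply: eq_bigr => b _; rewrite -big_split; apply: eq_bigr => e _ /=.
by rewrite -big_split; apply: eq_bigr => f _ /=; rewrite mxE; ring.
Qed.

Lemma form4D2 c u v v' w z : form4 c u (v + v') w z = form4 c u v w z + form4 c u v' w z.
Proof.
rewrite /form4 -big_split; apply: eq_bigr => a _; rewrite -big_split.
apply: eq_bigr => b _; rewrite -big_split; apply: eq_bigr => e _ /=.
by rewrite -big_split; apply: eq_bigr => f _ /=; rewrite mxE; ring.
Qed.

Lemma form4D3 c u v w w' z : form4 c u v (w + w') z = form4 c u v w z + form4 c u v w' z.
Proof.
rewrite /form4 -big_split; apply: eq_bigr => a _; rewrite -big_split.
apply: eq_bigr => b _; rewrite -big_split; apply: eq_bigr => e _ /=.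
by rewrite -big_split; apply: eq_bigr => f _ /=; rewrite mxE; ring.
Qed.

Lemma form4D4 c u v w z z' : form4 c u v w (z + z') = form4 c u v w z + form4 c u v w z'.
Proof.
rewrite /form4 -big_split; apply: eq_bigr => a _; rewrite -big_split.
apply: eq_bigr => b _; rewrite -big_split; apply: eq_bigr => e _ /=.
by rewrite -big_split; apply: eq_bigr => f _ /=; rewrite mxE; ring.
Qed.

Lemma form3_diagD c y u : sym3 c -> form3 c (y + u) (y + u) (y + u) =
  form3 c y y y + 3 * form3 c u y y + 3 * form3 c u u y + form3 c u u u.
Proof.
move=> s; rewrite !(form3D1, form3D2, form3D3).
rewrite [form3 _ y u y](form3_swap12 _ _ _ _ s) [form3 _ y y u](form3_swap23 _ _ _ _ s).
rewrite [form3 _ y u y](form3_swap12 _ _ _ _ s) [form3 _ u y u](form3_swap23 _ _ _ _ s).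
rewrite [form3 _ y u u](form3_swap12 _ _ _ _ s) [form3 _ u y u](form3_swap23 _ _ _ _ s).
ring.
Qed.

Lemma form4_diagB c y u :
  form4 c (y + u) (y + u) (y + u) (y + u) - form4 c y y y y =
  form4 c u (y + u) (y + u) (y + u) + form4 c y u (y + u) (y + u)
  + form4 c y y u (y + u) + form4 c y y y u.
Proof.
rewrite form4D1 [form4 c y (y + u) _ _]form4D2 [form4 c y y (y + u) _]form4D3.
by rewrite [form4 c y y y (y + u)]form4D4; ring.
Qed.

Lemma is_derive_form1 c x j : is_derive x (evec R j) (form1 c) (c j).
Proof.
apply: is_derive_eq.
  by apply: is_derive_bigsum => a; apply: is_derive_scale; exact: is_derive_coord.
by rewrite -[RHS](sum_delta c j); apply: eq_bigr => a _; rewrite mulrC.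
Qed.

Lemma is_derive_form2 c x j : is_derive x (evec R j) (fun y => form2 c y y)
  (form2 c (evec R j) x + form2 c x (evec R j)).
Proof.
apply: is_derive_eq.
  apply: is_derive_bigsum => a; apply: is_derive_bigsum => b; apply: is_derive_mul.
    by apply: is_derive_scale; exact: is_derive_coord.
  exact: is_derive_coord.
rewrite /form2 -big_split; apply: eq_bigr => a _ /=.
by rewrite -big_split; apply: eq_bigr => b _ /=; rewrite !evecE; ring.
Qed.

Lemma is_derive_form3 c x j : is_derive x (evec R j) (fun y => form3 c y y y)
  (form3 c (evec R j) x x + form3 c x (evec R j) x + form3 c x x (evec R j)).
Proof.
apply: is_derive_eq.
  apply: is_derive_bigsum => a; apply: is_derive_bigsum => b.
  apply: is_derive_bigsum => e; apply: is_derive_mul; last exact: is_derive_coord.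
  apply: is_derive_mul; last exact: is_derive_coord.
  by apply: is_derive_scale; exact: is_derive_coord.
rewrite /form3 -!big_split; apply: eq_bigr => a _ /=.
rewrite -!big_split; apply: eq_bigr => b _ /=.
by rewrite -!big_split; apply: eq_bigr => e _ /=; rewrite !evecE; ring.
Qed.

Lemma is_derive_form4 c x j : is_derive x (evec R j) (fun y => form4 c y y y y)
  (form4 c (evec R j) x x x + form4 c x (evec R j) x x + form4 c x x (evec R j) x
   + form4 c x x x (evec R j)).
Proof.
apply: is_derive_eq.
  apply: is_derive_bigsum => a; apply: is_derive_bigsum => b.
  apply: is_derive_bigsum => e; apply: is_derive_bigsum => f.
  apply: is_derive_mul; last exact: is_derive_coord.
  apply: is_derive_mul; last exact: is_derive_coord.
  apply: is_derive_mul; last exact: is_derive_coord.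
  by apply: is_derive_scale; exact: is_derive_coord.
rewrite /form4 -!big_split; apply: eq_bigr => a _ /=.
rewrite -!big_split; apply: eq_bigr => b _ /=.
rewrite -!big_split; apply: eq_bigr => e _ /=.
by rewrite -!big_split; apply: eq_bigr => f _ /=; rewrite !evecE; ring.
Qed.

Lemma is_derive_form2_sym c x j : sym2 c ->
  is_derive x (evec R j) (fun y => form2 c y y) (2 * form1 (c j) x).
Proof.
move=> s; apply: is_derive_eq; first exact: is_derive_form2.
by rewrite [form2 c x _]form2C // form2_evec mulr2n mulrDl mul1r.
Qed.

Lemma is_derive_form3_sym c x j : sym3 c ->
  is_derive x (evec R j) (fun y => form3 c y y y) (3 * form2 (c j) x x).
Proof.
move=> s; apply: is_derive_eq; first exact: is_derive_form3.
by rewrite [form3 c x x _]form3_swap23 // [form3 c x _ x]form3_swap12 // form3_evec; ring.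
Qed.

Lemma is_derive_form4_sym c x j : sym4 c ->
  is_derive x (evec R j) (fun y => form4 c y y y y) (4 * form3 (c j) x x x).
Proof.
move=> s; apply: is_derive_eq; first exact: is_derive_form4.
rewrite [form4 c x x x _]form4_swap34 // [form4 c x x _ x]form4_swap23 //.
by rewrite [form4 c x _ x x]form4_swap12 // form4_evec; ring.
Qed.

End MultilinearForms.

Section FormAlgebra.
Context {R : realType} {N : nat}.
Local Notation rv := ('rV[R]_N).
Local Notation I := ('I_N).
Implicit Types (x u v w z : rv).

Lemma form1_first (c : I -> R) u : form1 c u = \sum_a u 0 a * c a.
Proof. by apply: eq_bigr => a _; rewrite mulrC. Qed.

Lemma form2_first c u v : form2 c u v = \sum_a u 0 a * form1 (c a) v.
Proof.
apply: eq_bigr => a _; rewrite /form1 mulr_sumr.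
by apply: eq_bigr => b _; ring.
Qed.

Lemma form3_first c u v w : form3 c u v w = \sum_a u 0 a * form2 (c a) v w.
Proof.
apply: eq_bigr => a _; rewrite /form2 mulr_sumr; apply: eq_bigr => b _.
by rewrite mulr_sumr; apply: eq_bigr => e _; ring.
Qed.

Lemma form4_first c u v w z : form4 c u v w z = \sum_a u 0 a * form3 (c a) v w z.
Proof.
apply: eq_bigr => a _; rewrite /form3 mulr_sumr; apply: eq_bigr => b _.
rewrite mulr_sumr; apply: eq_bigr => e _.
by rewrite mulr_sumr; apply: eq_bigr => f _; ring.
Qed.

Lemma form2_coefD c d u v :
  form2 (fun a b => c a b + d a b) u v = form2 c u v + form2 d u v.
Proof.
rewrite /form2 -big_split; apply: eq_bigr => a _; rewrite -big_split.
by apply: eq_bigr => b _ /=; ring.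
Qed.

Lemma form3_coefD c d u v w :
  form3 (fun a b e => c a b e + d a b e) u v w = form3 c u v w + form3 d u v w.
Proof.
rewrite /form3 -big_split; apply: eq_bigr => a _; rewrite -big_split.
by apply: eq_bigr => b _ /=; rewrite -big_split; apply: eq_bigr => e _ /=; ring.
Qed.

Lemma form4_coefD c d u v w z :
  form4 (fun a b e f => c a b e f + d a b e f) u v w z
  = form4 c u v w z + form4 d u v w z.
Proof.
rewrite /form4 -big_split; apply: eq_bigr => a _; rewrite -big_split.
apply: eq_bigr => b _ /=; rewrite -big_split; apply: eq_bigr => e _ /=.
by rewrite -big_split; apply: eq_bigr => f _ /=; ring.
Qed.

Lemma form2_coefZ s c u v : form2 (fun a b => s * c a b) u v = s * form2 c u v.
Proof.
rewrite /form2 mulr_sumr; apply: eq_bigr => a _; rewrite mulr_sumr.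
by apply: eq_bigr => b _; ring.
Qed.

Lemma form3_coefZ s c u v w :
  form3 (fun a b e => s * c a b e) u v w = s * form3 c u v w.
Proof.
rewrite /form3 mulr_sumr; apply: eq_bigr => a _; rewrite mulr_sumr.
by apply: eq_bigr => b _; rewrite mulr_sumr; apply: eq_bigr => e _; ring.
Qed.

Lemma form4_coefZ s c u v w z :
  form4 (fun a b e f => s * c a b e f) u v w z = s * form4 c u v w z.
Proof.
rewrite /form4 mulr_sumr; apply: eq_bigr => a _; rewrite mulr_sumr.
apply: eq_bigr => b _; rewrite mulr_sumr; apply: eq_bigr => e _.
by rewrite mulr_sumr; apply: eq_bigr => f _; ring.
Qed.

Lemma form4_coef_sum (K : I -> I -> I -> I -> I -> R) u v w z :
  form4 (fun a b e f => \sum_i K i a b e f) u v w z = \sum_i form4 (K i) u v w z.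
Proof.
rewrite /form4 [RHS]exchange_big; apply: eq_bigr => a _ /=.
rewrite [RHS]exchange_big; apply: eq_bigr => b _ /=.
rewrite [RHS]exchange_big; apply: eq_bigr => e _ /=.
by rewrite [RHS]exchange_big; apply: eq_bigr => f _ /=; rewrite !mulr_suml.
Qed.

Lemma form1_delta j k u : form1 (fun a => (a == j)%:R * k) u = u 0 j * k.
Proof.
rewrite form1_first -[RHS](sum_delta (fun a => u 0 a * k) j).
by apply: eq_bigr => a _; ring.
Qed.

Lemma form2_delta j d u v :
  form2 (fun a b => (a == j)%:R * d b) u v = u 0 j * form1 d v.
Proof.
rewrite form2_first -[RHS](sum_delta (fun a => u 0 a * form1 d v) j).
apply: eq_bigr => a _; rewrite /form1 !mulr_sumr.
by apply: eq_bigr => b _; ring.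
Qed.

Lemma form3_delta j d u v w :
  form3 (fun a b e => (a == j)%:R * d b e) u v w = u 0 j * form2 d v w.
Proof.
rewrite form3_first -[RHS](sum_delta (fun a => u 0 a * form2 d v w) j).
by apply: eq_bigr => a _; rewrite form2_coefZ; ring.
Qed.

Lemma form2_mul p q u :
  form2 p u u * form2 q u u = form4 (fun a b e f => p a b * q e f) u u u u.
Proof.
rewrite /form2 /form4 mulr_suml; apply: eq_bigr => a _.
rewrite mulr_suml; apply: eq_bigr => b _.
rewrite mulr_sumr; apply: eq_bigr => e _.
by rewrite mulr_sumr; apply: eq_bigr => f _; ring.
Qed.

Definition coef_norm2 (c : I -> I -> R) := \sum_a \sum_b `|c a b|.
Definition coef_norm3 (c : I -> I -> I -> R) := \sum_a \sum_b \sum_e `|c a b e|.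
Definition coef_norm4 (c : I -> I -> I -> I -> R) :=
  \sum_a \sum_b \sum_e \sum_f `|c a b e f|.

Lemma coef_norm2_ge0 c : 0 <= coef_norm2 c.
Proof. by apply: sumr_ge0 => a _; apply: sumr_ge0. Qed.

Lemma coef_norm3_ge0 c : 0 <= coef_norm3 c.
Proof. by apply: sumr_ge0 => a _; apply: sumr_ge0 => b _; apply: sumr_ge0. Qed.

Lemma coef_norm4_ge0 c : 0 <= coef_norm4 c.
Proof.
by apply: sumr_ge0 => a _; apply: sumr_ge0 => b _; apply: sumr_ge0 => e _;
  apply: sumr_ge0.
Qed.

Lemma norm_form2_le c u v : `|form2 c u v| <= coef_norm2 c * (`|u| * `|v|).
Proof.
rewrite /coef_norm2 mulr_suml; apply: le_trans (ler_norm_sum _ _ _) _.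
apply: ler_sum => a _; rewrite mulr_suml; apply: le_trans (ler_norm_sum _ _ _) _.
apply: ler_sum => b _; rewrite !normrM -mulrA.
by apply: ler_wpM2l => //; apply: ler_pM => //; exact: norm_coord_le.
Qed.

Lemma norm_form3_le c u v w :
  `|form3 c u v w| <= coef_norm3 c * (`|u| * `|v| * `|w|).
Proof.
rewrite /coef_norm3 mulr_suml; apply: le_trans (ler_norm_sum _ _ _) _.
apply: ler_sum => a _; rewrite mulr_suml; apply: le_trans (ler_norm_sum _ _ _) _.
apply: ler_sum => b _; rewrite mulr_suml; apply: le_trans (ler_norm_sum _ _ _) _.
apply: ler_sum => e _; rewrite !normrM -!mulrA.
apply: ler_wpM2l => //; rewrite !mulrA.
by repeat (apply: ler_pM; rewrite ?mulr_ge0 //); exact: norm_coord_le.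
Qed.

Lemma norm_form4_le c u v w z :
  `|form4 c u v w z| <= coef_norm4 c * (`|u| * `|v| * `|w| * `|z|).
Proof.
rewrite /coef_norm4 mulr_suml; apply: le_trans (ler_norm_sum _ _ _) _.
apply: ler_sum => a _; rewrite mulr_suml; apply: le_trans (ler_norm_sum _ _ _) _.
apply: ler_sum => b _; rewrite mulr_suml; apply: le_trans (ler_norm_sum _ _ _) _.
apply: ler_sum => e _; rewrite mulr_suml; apply: le_trans (ler_norm_sum _ _ _) _.
apply: ler_sum => f _; rewrite !normrM -!mulrA.
apply: ler_wpM2l => //; rewrite !mulrA.
by repeat (apply: ler_pM; rewrite ?mulr_ge0 //); exact: norm_coord_le.
Qed.

End FormAlgebra.

Section SortedDerivatives.
Context {R : realType} {N : nat}.
Local Notation I := ('I_N).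
Variable V : 'rV[R]_N -> R.

Definition partial3_at0 (s : seq I) :=
  if s is [:: i; j; k] then partial i (partial j (partial k V)) 0 else 0.
Definition partial4_at0 (s : seq I) :=
  if s is [:: h; i; j; k] then partial h (partial i (partial j (partial k V))) 0 else 0.

(* Symmetric by construction, without appeal to the symmetry of mixed partials. *)
Definition deriv3 a b c := partial3_at0 (sort <=%O [:: a; b; c]).
Definition deriv4 a b c d := partial4_at0 (sort <=%O [:: a; b; c; d]).

Lemma deriv3_sym : sym3 deriv3.
Proof.
move=> a b c; split; rewrite /deriv3; congr partial3_at0; apply/perm_sort_leP;
  apply/permP => p /=; lia.
Qed.

Lemma deriv4_sym : sym4 deriv4.
Proof.
move=> a b c d; split; rewrite /deriv4; congr partial4_at0; apply/perm_sort_leP;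
  apply/permP => p /=; lia.
Qed.

Lemma deriv3_rev a b c : deriv3 a b c = deriv3 c b a.
Proof. by rewrite /deriv3; congr partial3_at0; apply/perm_sort_leP/permP => p /=; lia. Qed.

Lemma deriv4_rev a b c d : deriv4 a b c d = deriv4 d c b a.
Proof. by rewrite /deriv4; congr partial4_at0; apply/perm_sort_leP/permP => p /=; lia. Qed.

Lemma deriv3_sorted (i j k : I) : (i <= j <= k)%N ->
  deriv3 i j k = partial i (partial j (partial k V)) 0.
Proof.
move=> /andP[ij jk]; rewrite /deriv3 sorted_sort //.
  by move=> ? ? ?; exact: le_trans.
by rewrite /= leEord ij jk.
Qed.

Lemma deriv4_sorted (h i j k : I) : (h <= i <= j)%N -> (j <= k)%N ->
  deriv4 h i j k = partial h (partial i (partial j (partial k V))) 0.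
Proof.
move=> /andP[hi ij] jk.
rewrite /deriv4 sorted_sort //.
  by move=> ? ? ?; exact: le_trans.
by rewrite /= leEord hi ij jk.
Qed.

End SortedDerivatives.

Section Taylor4.
Context {R : realType} {N : nat}.
Local Notation rv := ('rV[R]_N).
Local Notation I := ('I_N).
Variables (V : rv -> R) (lam : I -> R).
Hypothesis V_C4 : Ck 4 V.
Hypothesis V0 : V 0 = 0.
Hypothesis V'0 : forall i : I, partial i V 0 = 0.
Hypothesis V''0 : forall i j : I,
  partial i (partial j V) 0 = if i == j then lam i else 0.

Definition hess (a b : I) := if a == b then lam a else 0.

Lemma hess_sym : sym2 hess.
Proof. by move=> a b; rewrite /hess eq_sym; case: eqP => // ->. Qed.

Definition taylor4 x := 2^-1 * form2 hess x x + 6^-1 * form3 (deriv3 V) x x x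
  + 24^-1 * form4 (deriv4 V) x x x x.
Definition taylor4_d1 k x := form1 (hess k) x + 2^-1 * form2 (deriv3 V k) x x
  + 6^-1 * form3 (deriv4 V k) x x x.
Definition taylor4_d2 j k x := hess k j + form1 (deriv3 V k j) x
  + 2^-1 * form2 (deriv4 V k j) x x.
Definition taylor4_d3 i j k x := deriv3 V k j i + form1 (deriv4 V k j i) x.

Lemma is_derive_taylor4 x k : is_derive x (evec R k) taylor4 (taylor4_d1 k x).
Proof.
apply: is_derive_eq.
  apply: is_derive_add; first apply: is_derive_add.
  - by apply: is_derive_scale; apply: is_derive_form2_sym; exact: hess_sym.
  - by apply: is_derive_scale; apply: is_derive_form3_sym; exact: deriv3_sym.
  - by apply: is_derive_scale; apply: is_derive_form4_sym; exact: deriv4_sym.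
by rewrite /taylor4_d1; field.
Qed.

Lemma is_derive_taylor4_d1 x j k : is_derive x (evec R j) (taylor4_d1 k) (taylor4_d2 j k x).
Proof.
apply: is_derive_eq.
  apply: is_derive_add; first apply: is_derive_add.
  - exact: is_derive_form1.
  - apply: is_derive_scale; apply: is_derive_form2_sym => a b.
    by rewrite (deriv3_sym V k a b).2.
  - apply: is_derive_scale; apply: is_derive_form3_sym => a b e.
    by have [_ ? ?] := deriv4_sym V k a b e.
by rewrite /taylor4_d2; field.
Qed.

Lemma is_derive_taylor4_d2 x i j k :
  is_derive x (evec R i) (taylor4_d2 j k) (taylor4_d3 i j k x).
Proof.
apply: is_derive_eq.
  apply: is_derive_add; first apply: is_derive_add.
  - exact: is_derive_form1.
  - apply: is_derive_scale; apply: is_derive_form2_sym => a b.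
    by have [_ _ ->] := deriv4_sym V k j a b.
by rewrite /taylor4_d3; field.
Qed.

Lemma is_derive_taylor4_d3 x h i j k :
  is_derive x (evec R h) (taylor4_d3 i j k) (deriv4 V k j i h).
Proof.
apply: is_derive_eq.
  by apply: is_derive_add; exact: is_derive_form1.
by rewrite add0r.
Qed.

Definition err0 x := V x - taylor4 x.
Definition err1 k x := partial k V x - taylor4_d1 k x.
Definition err2 j k x := partial j (partial k V) x - taylor4_d2 j k x.
Definition err3 i j k x := partial i (partial j (partial k V)) x - taylor4_d3 i j k x.
Definition err4 h i j k x :=
  partial h (partial i (partial j (partial k V))) x - deriv4 V k j i h.

Lemma is_derive_err0 x k : is_derive x (evec R k) err0 (err1 k x).
Proof. exact: is_derive_sub (derivableP (Ck_derivable k x V_C4)) (is_derive_taylor4 x k). Qed.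

Lemma is_derive_err1 x j k : is_derive x (evec R j) (err1 k) (err2 j k x).
Proof.
exact: is_derive_sub (derivableP (Ck_derivable j x (Ck_partial k V_C4)))
  (is_derive_taylor4_d1 x j k).
Qed.

Lemma is_derive_err2 x i j k : is_derive x (evec R i) (err2 j k) (err3 i j k x).
Proof.
exact: is_derive_sub (derivableP (Ck_derivable i x (Ck_partial j (Ck_partial k V_C4))))
  (is_derive_taylor4_d2 x i j k).
Qed.

Lemma is_derive_err3 x h i j k : is_derive x (evec R h) (err3 i j k) (err4 h i j k x).
Proof.
exact: is_derive_sub
  (derivableP (Ck_derivable h x (Ck_partial i (Ck_partial j (Ck_partial k V_C4)))))
  (is_derive_taylor4_d3 x h i j k).
Qed.

Lemma partial_err0 k : partial k err0 = err1 k.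
Proof. by apply/funext => x; apply: partialE; exact: is_derive_err0. Qed.

Lemma partial_err1 j k : partial j (err1 k) = err2 j k.
Proof. by apply/funext => x; apply: partialE; exact: is_derive_err1. Qed.

Lemma partial_err2 i j k : partial i (err2 j k) = err3 i j k.
Proof. by apply/funext => x; apply: partialE; exact: is_derive_err2. Qed.

Lemma partial_err3 h i j k : partial h (err3 i j k) = err4 h i j k.
Proof. by apply/funext => x; apply: partialE; exact: is_derive_err3. Qed.

Lemma err4_littleo (h i j k : I) : (h <= i <= j)%N -> (j <= k)%N ->
  littleo_low (err4 h i j k) h.+1 0.
Proof.
move=> hij jk e e0.
have V4_cont := Ck_continuous
  (Ck_partial h (Ck_partial i (Ck_partial j (Ck_partial k V_C4)))).
move: (V4_cont 0) => /cvgr_dist_le /(_ e e0) /nbhs_norm0P [d d0 Hd].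
exists d => // z _ zd; rewrite expr0 mulr1.
by have := Hd z zd; rewrite /err4 deriv4_rev -deriv4_sorted // distrC.
Qed.

Lemma err3_littleo (i j k : I) : (i <= j <= k)%N -> littleo_low (err3 i j k) i.+1 1.
Proof.
move=> /andP[ij jk]; apply: littleo_low_of_partials => //.
- by move=> h _ x; case: (is_derive_err3 x h i j k).
- by rewrite /err3 /taylor4_d3 form1_0 addr0 deriv3_rev deriv3_sorted ?ij // subrr.
- move=> h hi; rewrite partial_err3.
  by apply: err4_littleo => //; rewrite -ltnS hi ij.
Qed.

Lemma err2_littleo (j k : I) : (j <= k)%N -> littleo_low (err2 j k) j.+1 2.
Proof.
move=> jk; apply: littleo_low_of_partials => //.
- by move=> h _ x; case: (is_derive_err2 x h j k).
- rewrite /err2 /taylor4_d2 form1_0 form2_0 mulr0 !addr0 V''0 /hess eq_sym.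
  by case: eqP => [->|]; rewrite subrr.
- move=> i ij; rewrite partial_err2.
  by apply: err3_littleo; rewrite -ltnS ij jk.
Qed.

Lemma err1_littleo (k : I) : littleo_low (err1 k) k.+1 3.
Proof.
apply: littleo_low_of_partials => //.
- by move=> h _ x; case: (is_derive_err1 x h k).
- by rewrite /err1 /taylor4_d1 form1_0 form2_0 form3_0 !mulr0 !addr0 V'0 subrr.
- move=> j jk; rewrite partial_err1.
  by apply: err2_littleo; rewrite -ltnS jk.
Qed.

Lemma taylor4_littleo e : 0 < e -> exists2 d : R, 0 < d &
  forall z : rv, `|z| < d -> `|V z - taylor4 z| <= e * `|z| ^+ 4.
Proof.
have err0_small : littleo_low err0 N 4.
  apply: littleo_low_of_partials => //.
  - by move=> h _ x; case: (is_derive_err0 x h).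
  - by rewrite /err0 /taylor4 form2_0 form3_0 form4_0 !mulr0 !addr0 V0 subrr.
  - by move=> k _; rewrite partial_err0; exact: err1_littleo.
move=> e0; have [d d0 small] := err0_small e e0; exists d => // z zd.
by apply: small => // i iN; move: (ltn_ord i); rewrite ltnNge iN.
Qed.

End Taylor4.

Section SplitCoordinate.
Context {R : realType} {N : nat}.
Local Notation rv := ('rV[R]_N).
Local Notation I := ('I_N).
Implicit Types (y : rv).
Variable o : I.

(* [cofactor3 c j] collects the monomials of [form3 c y y y] whose first index
   different from [o] is [j] (see [form3_split]). *)
Definition cofactor3 (c : I -> I -> I -> R) j a b :=
  c j a b + (a == o)%:R * c o j b + (a == o)%:R * ((b == o)%:R * c o o j).
Definition cofactor4 (c : I -> I -> I -> I -> R) j a b e :=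
  c j a b e + (a == o)%:R * c o j b e + (a == o)%:R * ((b == o)%:R * c o o j e)
  + (a == o)%:R * ((b == o)%:R * ((e == o)%:R * c o o o j)).

Lemma form2_cofactor3 c j y : form2 (cofactor3 c j) y y =
  form2 (c j) y y + y 0 o * form1 (c o j) y + y 0 o * (y 0 o * c o o j).
Proof.
rewrite /cofactor3 (form2_coefD (fun a b => c j a b + (a == o)%:R * c o j b)).
rewrite (form2_coefD (fun a b => c j a b)) (form2_delta o (fun b => c o j b)).
by rewrite (form2_delta o (fun b => (b == o)%:R * c o o j)) form1_delta.
Qed.

Lemma form3_cofactor4 c j y : form3 (cofactor4 c j) y y y =
  form3 (c j) y y y + y 0 o * form2 (c o j) y y + y 0 o * (y 0 o * form1 (c o o j) y)
  + y 0 o * (y 0 o * (y 0 o * c o o o j)).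
Proof.
rewrite /cofactor4 (form3_coefD (fun a b e => c j a b e + (a == o)%:R * c o j b e
     + (a == o)%:R * ((b == o)%:R * c o o j e))).
rewrite (form3_coefD (fun a b e => c j a b e + (a == o)%:R * c o j b e)).
rewrite (form3_coefD (fun a b e => c j a b e)) (form3_delta o (fun b e => c o j b e)).
rewrite (form3_delta o (fun b e => (b == o)%:R * c o o j e)).
rewrite (form3_delta o (fun b e => (b == o)%:R * ((e == o)%:R * c o o o j))).
rewrite (form2_delta o (fun e => c o o j e)) (form2_delta o (fun e => (e == o)%:R * c o o o j)).
by rewrite form1_delta.
Qed.

Lemma form3_split c y : form3 c y y y =
  c o o o * y 0 o ^+ 3 + \sum_(j | j != o) y 0 j * form2 (cofactor3 c j) y y.
Proof.
rewrite form3_first (bigD1 o) //= form2_first (bigD1 o) //= form1_first (bigD1 o) //=.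
have -> : \sum_(j | j != o) y 0 j * form2 (cofactor3 c j) y y =
   \sum_(j | j != o) y 0 j * form2 (c j) y y
   + y 0 o * \sum_(j | j != o) y 0 j * form1 (c o j) y
   + y 0 o ^+ 2 * \sum_(j | j != o) y 0 j * c o o j.
  by rewrite !mulr_sumr -!big_split /=; apply: eq_bigr => j _; rewrite form2_cofactor3; ring.
ring.
Qed.

Lemma form4_split c y : form4 c y y y y =
  c o o o o * y 0 o ^+ 4 + \sum_(j | j != o) y 0 j * form3 (cofactor4 c j) y y y.
Proof.
rewrite form4_first (bigD1 o) //= form3_first (bigD1 o) //= form2_first (bigD1 o) //=.
rewrite form1_first (bigD1 o) //=.
have -> : \sum_(j | j != o) y 0 j * form3 (cofactor4 c j) y y y =
   \sum_(j | j != o) y 0 j * form3 (c j) y y y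
   + y 0 o * \sum_(j | j != o) y 0 j * form2 (c o j) y y
   + y 0 o ^+ 2 * \sum_(j | j != o) y 0 j * form1 (c o o j) y
   + y 0 o ^+ 3 * \sum_(j | j != o) y 0 j * c o o o j.
  by rewrite !mulr_sumr -!big_split /=; apply: eq_bigr => j _; rewrite form3_cofactor4; ring.
ring.
Qed.

End SplitCoordinate.

Lemma ler_sum_term {R : numDomainType} {I : finType} (F : I -> R) j :
  (forall i, 0 <= F i) -> F j <= \sum_i F i.
Proof. by move=> F0; rewrite (bigD1 j) //= lerDl sumr_ge0. Qed.

Lemma ler_pM3 {R : numDomainType} {a b c a' b' c' : R} : 0 <= a -> 0 <= b -> 0 <= c ->
  a <= a' -> b <= b' -> c <= c' -> a * b * c <= a' * b' * c'.
Proof.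
move=> a0 b0 c0 aa bb cc; apply: ler_pM => //; first by rewrite mulr_ge0.
exact: ler_pM.
Qed.

Lemma ler_pM4 {R : numDomainType} {a b c d a' b' c' d' : R} :
  0 <= a -> 0 <= b -> 0 <= c -> 0 <= d ->
  a <= a' -> b <= b' -> c <= c' -> d <= d' -> a * b * c * d <= a' * b' * c' * d'.
Proof.
move=> a0 b0 c0 d0 aa bb cc dd; apply: ler_pM => //; first by rewrite !mulr_ge0.
exact: ler_pM3.
Qed.

Lemma norm_form4_le_small {R : realType} {N : nat} (c : 'I_N -> 'I_N -> 'I_N -> 'I_N -> R)
    (p q r s : 'rV[R]_N) (A B : R) :
  `|p| <= A -> `|q| <= A -> `|r| <= A -> `|s| <= A ->
  [\/ `|p| <= B, `|q| <= B, `|r| <= B | `|s| <= B] ->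
  `|form4 c p q r s| <= coef_norm4 c * (B * A ^+ 3).
Proof.
move=> pA qA rA sA small; apply: le_trans (norm_form4_le _ _ _ _ _) _.
apply: ler_wpM2l; first exact: coef_norm4_ge0.
case: small => small.
- have -> : B * A ^+ 3 = B * A * A * A by ring.
  exact: ler_pM4.
- have -> : B * A ^+ 3 = A * B * A * A by ring.
  exact: ler_pM4.
- have -> : B * A ^+ 3 = A * A * B * A by ring.
  exact: ler_pM4.
- have -> : B * A ^+ 3 = A * A * A * B by ring.
  exact: ler_pM4.
Qed.

Section NormalForm.
Context {R : realType} {n : nat}.
Local Notation N := n.+2.
Local Notation rv := ('rV[R]_N).
Local Notation I := ('I_N).
Local Notation o := (@ord0 n.+1).
Variables (V : rv -> R) (lam : I -> R).
Hypothesis lam_o : lam o = 0.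
Hypothesis lam_neq0 : forall i, i != o -> lam i != 0.

Definition cubic_coef a b e := 6^-1 * deriv3 V a b e.

Definition gq (i j k : I) :=
  if i == o then 0 else - (lam i)^-1 * cofactor3 o cubic_coef i j k.
Definition g2 i (y : rv) := form2 (gq i) y y.
Definition g2v (y : rv) : rv := \row_i g2 i y.

(* the coefficients of the quartic part of [taylor4 V lam (y + g2v y)] *)
Definition quartic_coef a b e f := \sum_i (2^-1 * gq i a b) * deriv3 V i e f
  + \sum_i (2^-1 * lam i * gq i a b) * gq i e f + 24^-1 * deriv4 V a b e f.

Definition gc (i j k l : I) :=
  if i == o then 0 else - (lam i)^-1 * cofactor4 o quartic_coef i j k l.
Definition g3 i (y : rv) := form3 (gc i) y y y.
Definition g3v (y : rv) : rv := \row_i g3 i y.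

Definition normal_form (y : rv) := 2^-1 * \sum_a lam a * y 0 a ^+ 2
  + cubic_coef o o o * y 0 o ^+ 3 + quartic_coef o o o o * y 0 o ^+ 4.

Lemma cubic_terms_cancel y :
  form3 cubic_coef y y y + \sum_a lam a * y 0 a * g2 a y = cubic_coef o o o * y 0 o ^+ 3.
Proof.
rewrite (form3_split o) [X in _ + X = _](bigD1 o) //= lam_o !mul0r add0r.
have -> : \sum_(a | a != o) lam a * y 0 a * g2 a y =
    - \sum_(j | j != o) y 0 j * form2 (cofactor3 o cubic_coef j) y y.
  rewrite -sumrN; apply: eq_bigr => a a0.
  rewrite /g2 /gq (negbTE a0) (form2_coefZ (- (lam a)^-1)).
  by field; rewrite lam_neq0.
by rewrite addrK.
Qed.

Lemma quartic_terms_cancel y :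
  form4 quartic_coef y y y y + \sum_a lam a * y 0 a * g3 a y
  = quartic_coef o o o o * y 0 o ^+ 4.
Proof.
rewrite (form4_split o) [X in _ + X = _](bigD1 o) //= lam_o !mul0r add0r.
have -> : \sum_(a | a != o) lam a * y 0 a * g3 a y =
    - \sum_(j | j != o) y 0 j * form3 (cofactor4 o quartic_coef j) y y y.
  rewrite -sumrN; apply: eq_bigr => a a0.
  rewrite /g3 /gc (negbTE a0) (form3_coefZ (- (lam a)^-1)).
  by field; rewrite lam_neq0.
by rewrite addrK.
Qed.

Lemma quartic_coefE y : form4 quartic_coef y y y y =
  2^-1 * form3 (deriv3 V) (g2v y) y y + 2^-1 * \sum_a lam a * g2 a y ^+ 2
  + 24^-1 * form4 (deriv4 V) y y y y.
Proof.
rewrite /quartic_coef (form4_coefD (fun a b e f => \sum_i (2^-1 * gq i a b) * deriv3 V i e f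
  + \sum_i (2^-1 * lam i * gq i a b) * gq i e f)).
rewrite (form4_coefD (fun a b e f => \sum_i (2^-1 * gq i a b) * deriv3 V i e f)).
rewrite !form4_coef_sum form4_coefZ form3_first.
congr (_ + _ + _).
- rewrite mulr_sumr; apply: eq_bigr => i _; rewrite mxE /g2 form2_mul -form4_coefZ.
  by congr form4; do 4!apply/funext => ? /=; ring.
- rewrite mulr_sumr; apply: eq_bigr => i _; rewrite /g2 expr2 form2_mul -!form4_coefZ.
  by congr form4; do 4!apply/funext => ? /=; ring.
Qed.

Lemma quartic_coef_o : quartic_coef o o o o = 24^-1 * deriv4 V o o o o
  - 2^-1 * \sum_(j | j != o) (2^-1 * deriv3 V o o j) ^+ 2 / lam j.
Proof.
rewrite /quartic_coef (bigD1 o) //= [X in _ + X + _](bigD1 o) //= /gq eqxx.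
rewrite !mulr0 !mul0r !add0r addrC; congr (_ + _).
rewrite -big_split /= mulr_sumr -sumrN; apply: eq_bigr => j j0.
rewrite (negbTE j0) /cofactor3 eqxx !mul1r /cubic_coef.
rewrite (deriv3_rev V j o o) (deriv3_sym V o j o).2.
by field; rewrite lam_neq0.
Qed.

Lemma normal_formE y : normal_form y =
  2^-1 * \sum_(i : I | (1 <= i)%N) lam i * y 0 i ^+ 2
  + 6^-1 * partial o (partial o (partial o V)) 0 * y 0 o ^+ 3
  + (24^-1 * partial o (partial o (partial o (partial o V))) 0
     - 2^-1 * \sum_(j : I | (1 <= j)%N)
                ((2^-1 * partial o (partial o (partial j V)) 0) ^+ 2 / lam j))
    * y 0 o ^+ 4.
Proof.
rewrite /normal_form quartic_coef_o /cubic_coef deriv3_sorted // deriv4_sorted //.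
congr (2^-1 * _ + _ + (_ - 2^-1 * _) * _).
  by rewrite [LHS](bigD1 o) //= lam_o mul0r add0r; apply: eq_bigl => i; rewrite lt0n.
by apply: eq_big => [j|j _]; rewrite ?lt0n // deriv3_sorted.
Qed.

Lemma form2_hess (v : rv) : form2 (hess lam) v v = \sum_a lam a * v 0 a ^+ 2.
Proof.
rewrite form2_first; apply: eq_bigr => a _.
rewrite /form1 (bigD1 a) //= /hess eqxx big1 ?addr0; first by ring.
by move=> b ba; rewrite eq_sym (negbTE ba) mul0r.
Qed.

(* Every term on the right-hand side is of degree at least 5 in y. *)
Lemma taylor4_substE y : let u := g2v y + g3v y in let x := y + u in
  taylor4 V lam x - normal_form y
  = 2^-1 * \sum_a lam a * (u 0 a ^+ 2 - g2 a y ^+ 2)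
    + 2^-1 * form3 (deriv3 V) (g3v y) y y + 2^-1 * form3 (deriv3 V) u u y
    + 6^-1 * form3 (deriv3 V) u u u
    + 24^-1 * (form4 (deriv4 V) x x x x - form4 (deriv4 V) y y y y).
Proof.
move=> u x.
have cubicE : 6^-1 * form3 (deriv3 V) y y y + \sum_a lam a * y 0 a * g2 a y =
    cubic_coef o o o * y 0 o ^+ 3.
  by rewrite -form3_coefZ; exact: cubic_terms_cancel.
have quarticE := quartic_terms_cancel y; rewrite quartic_coefE in quarticE.
rewrite /normal_form -cubicE -quarticE /taylor4 form2_hess.
have squaresE : \sum_a lam a * x 0 a ^+ 2 = \sum_a lam a * y 0 a ^+ 2
   + 2 * \sum_a lam a * y 0 a * g2 a y + 2 * \sum_a lam a * y 0 a * g3 a y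
   + \sum_a lam a * g2 a y ^+ 2 + \sum_a lam a * (u 0 a ^+ 2 - g2 a y ^+ 2).
  rewrite !mulr_sumr -!big_split; apply: eq_bigr => a _ /=.
  by rewrite /x /u !mxE; ring.
have linE : form3 (deriv3 V) u y y =
    form3 (deriv3 V) (g2v y) y y + form3 (deriv3 V) (g3v y) y y by rewrite form3D1.
by rewrite squaresE (form3_diagD _ y u (deriv3_sym V)) linE; field.
Qed.


Definition gcoef_bound := \sum_i coef_norm2 (gq i) + \sum_i coef_norm3 (gc i) + 1.
Local Notation M := gcoef_bound.
Definition lam_norm := \sum_a `|lam a|.

Lemma gcoef_bound_ge1 : 1 <= M.
Proof.
rewrite /M lerDr addr_ge0 // sumr_ge0 // => i _.
  exact: coef_norm2_ge0.
exact: coef_norm3_ge0.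
Qed.

Lemma gcoef_bound_ge0 : 0 <= M.
Proof. exact: le_trans ler01 gcoef_bound_ge1. Qed.

Lemma norm_g2_le i y : `|g2 i y| <= M * `|y| ^+ 2.
Proof.
apply: le_trans (norm_form2_le _ _ _) _; rewrite expr2.
apply: ler_wpM2r; first by rewrite mulr_ge0.
apply: le_trans (ler_sum_term _ _ (fun j => coef_norm2_ge0 (gq j))) _.
by rewrite /M -addrA lerDl addr_ge0 // sumr_ge0 // => j _; exact: coef_norm3_ge0.
Qed.

Lemma norm_g3_le i y : `|g3 i y| <= M * `|y| ^+ 3.
Proof.
apply: le_trans (norm_form3_le _ _ _ _) _.
have -> : `|y| ^+ 3 = `|y| * `|y| * `|y| by rewrite !exprS expr0 mulr1 mulrA.
apply: ler_wpM2r; first by rewrite !mulr_ge0.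
apply: le_trans (ler_sum_term _ _ (fun j => coef_norm3_ge0 (gc j))) _.
by rewrite /M addrAC lerDr addr_ge0 // sumr_ge0 // => j _; exact: coef_norm2_ge0.
Qed.

Lemma norm_g2v_le y : `|g2v y| <= M * `|y| ^+ 2.
Proof.
apply: norm_row_le; first by rewrite mulr_ge0 ?gcoef_bound_ge0 ?exprn_ge0.
by move=> i; rewrite mxE norm_g2_le.
Qed.

Lemma norm_g3v_le y : `|g3v y| <= M * `|y| ^+ 3.
Proof.
apply: norm_row_le; first by rewrite mulr_ge0 ?gcoef_bound_ge0 ?exprn_ge0.
by move=> i; rewrite mxE norm_g3_le.
Qed.

Section SmallArgument.
Variable y : rv.
Hypothesis y_le1 : `|y| <= 1.
Local Notation t := (`|y|).
Local Notation u := (g2v y + g3v y).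
Local Notation x := (y + (g2v y + g3v y)).

Let t3_le_t2 : t ^+ 3 <= t ^+ 2.
Proof. exact: ler_wiXn2l. Qed.

Lemma norm_g_le : `|u| <= 2 * M * t ^+ 2.
Proof.
apply: le_trans (ler_normD _ _) _.
have := norm_g3v_le y; have := norm_g2v_le y; have := t3_le_t2.
have := gcoef_bound_ge0; nra.
Qed.

Lemma norm_g_le_lin : `|u| <= 3 * M * t.
Proof.
apply: le_trans norm_g_le _; have := ler_wpM2l (mulr_ge0 gcoef_bound_ge0 (normr_ge0 y)) y_le1.
have := gcoef_bound_ge1; have := normr_ge0 y; rewrite expr2 mulr1; nra.
Qed.

Lemma norm_id_le_lin : t <= 3 * M * t.
Proof. by have := gcoef_bound_ge1; have := normr_ge0 y; nra. Qed.

Lemma norm_subst_le : `|x| <= 3 * M * t.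
Proof.
apply: le_trans (ler_normD _ _) _.
have := norm_g_le; have := gcoef_bound_ge1; have := normr_ge0 y.
have := ler_wpM2l (mulr_ge0 gcoef_bound_ge0 (normr_ge0 y)) y_le1.
rewrite expr2 mulr1; nra.
Qed.

Lemma norm_square_defect_le :
  `|\sum_a lam a * (u 0 a ^+ 2 - g2 a y ^+ 2)| <= lam_norm * (3 * M ^+ 2 * t ^+ 5).
Proof.
apply: le_trans (ler_norm_sum _ _ _) _; rewrite /lam_norm mulr_suml.
apply: ler_sum => a _; rewrite normrM; apply: ler_wpM2l => //.
rewrite !mxE.
have -> : (g2 a y + g3 a y) ^+ 2 - g2 a y ^+ 2 = g3 a y * (2 * g2 a y + g3 a y) by ring.
rewrite normrM.
have h2 := norm_g2_le a y; have h3 := norm_g3_le a y.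
have sum_le : `|2 * g2 a y + g3 a y| <= 3 * M * t ^+ 2.
  apply: le_trans (ler_normD _ _) _; rewrite normrM ger0_norm //.
  by have := t3_le_t2; have := gcoef_bound_ge0; nra.
apply: le_trans (ler_pM (normr_ge0 _) (normr_ge0 _) h3 sum_le) _.
by rewrite le_eqVlt; apply/orP; left; apply/eqP; ring.
Qed.

Lemma norm_form3_g3yy_le : `|form3 (deriv3 V) (g3v y) y y| <= coef_norm3 (deriv3 V) * (M * t ^+ 5).
Proof.
apply: le_trans (norm_form3_le _ _ _ _) _; apply: ler_wpM2l; first exact: coef_norm3_ge0.
apply: le_trans (ler_pM3 (normr_ge0 _) (normr_ge0 y) (normr_ge0 y) (norm_g3v_le y) (lexx t) (lexx t)) _.
by rewrite le_eqVlt; apply/orP; left; apply/eqP; ring.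
Qed.

Lemma norm_form3_uuy_le : `|form3 (deriv3 V) u u y| <= coef_norm3 (deriv3 V) * (4 * M ^+ 2 * t ^+ 5).
Proof.
apply: le_trans (norm_form3_le _ _ _ _) _; apply: ler_wpM2l; first exact: coef_norm3_ge0.
apply: le_trans (ler_pM3 (normr_ge0 _) (normr_ge0 _) (normr_ge0 y) norm_g_le norm_g_le (lexx t)) _.
by rewrite le_eqVlt; apply/orP; left; apply/eqP; ring.
Qed.

Lemma norm_form3_uuu_le : `|form3 (deriv3 V) u u u| <= coef_norm3 (deriv3 V) * (8 * M ^+ 3 * t ^+ 5).
Proof.
apply: le_trans (norm_form3_le _ _ _ _) _; apply: ler_wpM2l; first exact: coef_norm3_ge0.
apply: le_trans (ler_pM3 (normr_ge0 _) (normr_ge0 _) (normr_ge0 _) norm_g_le norm_g_le norm_g_le) _.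
have -> : 2 * M * t ^+ 2 * (2 * M * t ^+ 2) * (2 * M * t ^+ 2) = 8 * M ^+ 3 * t ^+ 6 by ring.
apply: ler_wpM2l; first by rewrite mulr_ge0 // exprn_ge0 // gcoef_bound_ge0.
exact: ler_wiXn2l.
Qed.

Lemma norm_form4_subst_le : `|form4 (deriv4 V) x x x x - form4 (deriv4 V) y y y y| <=
  coef_norm4 (deriv4 V) * (216 * M ^+ 4 * t ^+ 5).
Proof.
rewrite form4_diagB.
have term_le p q r s : `|p| <= 3 * M * t -> `|q| <= 3 * M * t ->
    `|r| <= 3 * M * t -> `|s| <= 3 * M * t ->
    [\/ `|p| <= 2 * M * t ^+ 2, `|q| <= 2 * M * t ^+ 2,
        `|r| <= 2 * M * t ^+ 2 | `|s| <= 2 * M * t ^+ 2] ->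
    `|form4 (deriv4 V) p q r s| <= coef_norm4 (deriv4 V) * (54 * M ^+ 4 * t ^+ 5).
  move=> pA qA rA sA small.
  have -> : 54 * M ^+ 4 * t ^+ 5 = 2 * M * t ^+ 2 * (3 * M * t) ^+ 3 by ring.
  exact: norm_form4_le_small.
have B1 := term_le _ _ _ _ norm_g_le_lin norm_subst_le norm_subst_le norm_subst_le
  (Or41 _ _ _ norm_g_le).
have B2 := term_le _ _ _ _ norm_id_le_lin norm_g_le_lin norm_subst_le norm_subst_le
  (Or42 _ _ _ norm_g_le).
have B3 := term_le _ _ _ _ norm_id_le_lin norm_id_le_lin norm_g_le_lin norm_subst_le
  (Or43 _ _ _ norm_g_le).
have B4 := term_le _ _ _ _ norm_id_le_lin norm_id_le_lin norm_id_le_lin norm_g_le_lin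
  (Or44 _ _ _ norm_g_le).
apply: le_trans (ler_normD _ _) _; apply: le_trans (lerD (ler_normD _ _) (lexx _)) _.
apply: le_trans (lerD (lerD (ler_normD _ _) (lexx _)) (lexx _)) _.
have := coef_norm4_ge0 (deriv4 V); lra.
Qed.

End SmallArgument.

Definition remainder_const := lam_norm * (3 * M ^+ 2) + coef_norm3 (deriv3 V) * M
  + coef_norm3 (deriv3 V) * (4 * M ^+ 2) + coef_norm3 (deriv3 V) * (8 * M ^+ 3)
  + coef_norm4 (deriv4 V) * (216 * M ^+ 4) + 1.

Lemma remainder_const_gt0 : 0 < remainder_const.
Proof.
have M0 := gcoef_bound_ge0.
have L0 : 0 <= lam_norm by apply: sumr_ge0.
have D3 := coef_norm3_ge0 (deriv3 V); have D4 := coef_norm4_ge0 (deriv4 V).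
rewrite /remainder_const ltr_wpDl // !addr_ge0 // !mulr_ge0 // exprn_ge0 //.
Qed.

Lemma normal_form_remainder_le y : `|y| <= 1 ->
  `|taylor4 V lam (y + (g2v y + g3v y)) - normal_form y| <= remainder_const * `|y| ^+ 5.
Proof.
move=> y1; rewrite taylor4_substE.
have h1 := norm_square_defect_le y y1; have h2 := norm_form3_g3yy_le y.
have h3 := norm_form3_uuy_le y y1; have h4 := norm_form3_uuu_le y y1.
have h5 := norm_form4_subst_le y y1.
apply: le_trans (ler_normD _ _) _.
apply: le_trans (lerD (ler_normD _ _) (lexx _)) _.
apply: le_trans (lerD (lerD (ler_normD _ _) (lexx _)) (lexx _)) _.
apply: le_trans (lerD (lerD (lerD (ler_normD _ _) (lexx _)) (lexx _)) (lexx _)) _.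
have n1 := normr_ge0 (\sum_a lam a * ((g2v y + g3v y) 0 a ^+ 2 - g2 a y ^+ 2)).
have n2 := normr_ge0 (form3 (deriv3 V) (g3v y) y y).
have n3 := normr_ge0 (form3 (deriv3 V) (g2v y + g3v y) (g2v y + g3v y) y).
have n4 := normr_ge0 (form3 (deriv3 V) (g2v y + g3v y) (g2v y + g3v y) (g2v y + g3v y)).
have n5 := normr_ge0 (form4 (deriv4 V) (y + (g2v y + g3v y)) (y + (g2v y + g3v y))
  (y + (g2v y + g3v y)) (y + (g2v y + g3v y)) - form4 (deriv4 V) y y y y).
have t5 : 0 <= `|y| ^+ 5 by rewrite exprn_ge0.
rewrite !normrM !(@ger0_norm _ (_^-1)) // /remainder_const !mulrDl mul1r.
rewrite -!mulrA in h1 h2 h3 h4 h5 *.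
lra.
Qed.

Hypothesis V_C4 : Ck 4 V.
Hypothesis V0 : V 0 = 0.
Hypothesis V'0 : forall i : I, partial i V 0 = 0.
Hypothesis V''0 : forall i j : I,
  partial i (partial j V) 0 = if i == j then lam i else 0.

Lemma normal_form_littleo e : 0 < e -> exists2 d : R, 0 < d &
  forall y : rv, `|y| < d -> `|V (y + (g2v y + g3v y)) - normal_form y| <= e * `|y| ^+ 4.
Proof.
move=> e0; have M1 := gcoef_bound_ge1.
have M0 : 0 < 3 * M by rewrite mulr_gt0 // (lt_le_trans ltr01 M1).
pose e1 := e / (2 * (3 * M) ^+ 4).
have e10 : 0 < e1 by rewrite divr_gt0 // mulr_gt0 // exprn_gt0.
have [d1 d10 taylor_le] := @taylor4_littleo _ _ V lam V_C4 V0 V'0 V''0 _ e10.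
have C0 := remainder_const_gt0.
exists (Num.min 1 (Num.min (d1 / (3 * M)) (e / (2 * remainder_const)))).
  by rewrite !lt_min ltr01 !divr_gt0 // mulr_gt0.
move=> y; rewrite !lt_min => /and3P[/ltW y1 yd1 ye].
set x := y + (g2v y + g3v y).
have xd1 : `|x| < d1.
  apply: le_lt_trans (norm_subst_le y y1) _.
  by rewrite mulrC -ltr_pdivlMr.
have T := taylor_le x xd1; have Rb := normal_form_remainder_le y y1.
have B1 : e1 * `|x| ^+ 4 <= e / 2 * `|y| ^+ 4.
  apply: le_trans (_ : e1 * (3 * M * `|y|) ^+ 4 <= _).
    apply: ler_wpM2l; first exact: ltW.
    apply: lerXn2r; rewrite ?nnegrE ?mulr_ge0 ?(ltW M0) ?gcoef_bound_ge0 //.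
    exact: norm_subst_le y y1.
  rewrite le_eqVlt; apply/orP; left; apply/eqP; rewrite /e1 exprMn; field.
  by rewrite gt_eqF // (lt_le_trans ltr01 M1).
have B2 : remainder_const * `|y| ^+ 5 <= e / 2 * `|y| ^+ 4.
  rewrite exprS mulrA; apply: ler_wpM2r; first exact: exprn_ge0.
  apply: le_trans (ler_wpM2l (ltW C0) (ltW ye)) _.
  by rewrite le_eqVlt; apply/orP; left; apply/eqP; field; rewrite gt_eqF.
have -> : V x - normal_form y = (V x - taylor4 V lam x) + (taylor4 V lam x - normal_form y).
  by rewrite addrA subrK.
apply: le_trans (ler_normD _ _) _.
have := le_trans T B1; have := le_trans Rb B2; lra.
Qed.

End NormalForm.

Lemma nonzero_off_first {R : numDomainType} {n : nat} (lam : 'I_n.+2 -> R) :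
  lam (inord 1) != 0 -> (forall i : 'I_n.+2, (2 <= i)%N -> 0 < lam i) ->
  forall i, i != ord0 -> lam i != 0.
Proof.
move=> lam1 lam_pos i i0; have [i2|] := ltnP 1 i; first by rewrite gt_eqF ?lam_pos.
rewrite leq_eqVlt ltnS leqn0 -[i == 0%N :> nat]/(i == ord0) (negbTE i0) orbF.
by move=> /eqP i1; have -> : i = inord 1 by apply: ord_inj; rewrite inordK.
Qed.

Theorem proposition2p8 (R : realType) (n : nat) (V : 'rV[R]_n.+2 -> R)
  (lam : 'I_n.+2 -> R) :
  Ck 4 V ->
  V 0 = 0 ->
  (forall i : 'I_n.+2, partial i V 0 = 0) ->
  (forall i j : 'I_n.+2,
      partial i (partial j V) 0 = if i == j then lam i else 0) ->
  lam ord0 = 0 ->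
  lam (inord 1) != 0 ->
  (forall i : 'I_n.+2, (2 <= i)%N -> 0 < lam i) ->
  let p1 := @ord0 n.+1 in
  let V111 := 6^-1 * partial p1 (partial p1 (partial p1 V)) 0 in
  let V1111 := 24^-1 * partial p1 (partial p1 (partial p1 (partial p1 V))) 0 in
  let V11 (j : 'I_n.+2) := 2^-1 * partial p1 (partial p1 (partial j V)) 0 in
  let C3 := V111 in
  let C4 := V1111 - 2^-1 * \sum_(j : 'I_n.+2 | (1 <= j)%N) (V11 j ^+ 2 / lam j) in
  exists (a : 'I_n.+2 -> 'I_n.+2 -> 'I_n.+2 -> R)
         (b : 'I_n.+2 -> 'I_n.+2 -> 'I_n.+2 -> 'I_n.+2 -> R),
    let g (y : 'rV[R]_n.+2) : 'rV[R]_n.+2 :=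
      \row_(i < n.+2)
        (\sum_(j < n.+2) \sum_(k < n.+2) a i j k * y 0 j * y 0 k
         + \sum_(j < n.+2) \sum_(k < n.+2) \sum_(l < n.+2)
              b i j k l * y 0 j * y 0 k * y 0 l) in
    (fun y : 'rV[R]_n.+2 =>
       V (y + g y)
       - (2^-1 * \sum_(i : 'I_n.+2 | (1 <= i)%N) lam i * y 0 i ^+ 2
          + C3 * y 0 p1 ^+ 3 + C4 * y 0 p1 ^+ 4))
      =o_ (nbhs (0 : 'rV[R]_n.+2)) (fun y : 'rV[R]_n.+2 => `|y| ^+ 4).
Proof.
move=> V_C4 V0 V'0 V''0 lam_o lam1 lam_pos p1 V111 V1111 V11 C3 C4.
have lam_neq0 := nonzero_off_first lam lam1 lam_pos.
exists (gq V lam), (gc V lam) => g.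
have gE y : g y = g2v V lam y + g3v V lam y by apply/matrixP => i j; rewrite !mxE.
apply/eqoP => e e0.
have [d d0 small] := normal_form_littleo V lam lam_o lam_neq0 V_C4 V0 V'0 V''0 _ e0.
apply: filterS (nbhs0_lt d0) => y /= yd.
rewrite gE -(normal_formE V lam lam_o lam_neq0) [`|_ ^+ 4|]ger0_norm ?exprn_ge0 //.
exact: small.
Qed.
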